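(* If $\mathbb P(T(X)\ge 1-\alpha)>0$, then $\mathbb E[D^\mu(X)]>0$ for every $\mu\ge 0$.
   Context: Let $(X,Y)\sim P_{XY}$ on $\mathcal X\times\mathcal Y$, $\alpha\in(0,1)$, $\mathcal I$ a finite collection of subsets of $\mathcal Y$, $w:\mathcal I\to(0,B)$ a bounded positive weight. For $C\in\mathcal I$ let $p_C(x)=\mathbb P(Y\in C\mid X=x)$, $\ell_{x,C}(\mu)=w(C)p_C(x)+\mu(p_C(x)-(1-\alpha))$ for $\mu\ge0$, $\mathcal U_x(\mu)=\max_{C\in\mathcal I}\ell_{x,C}(\mu)$, $D^\mu(x)=\mathbb 1\{\mathcal U_x(\mu)\ge0\}$, and $T(x)=\max_{C\in\mathcal I}p_C(x)$. *)

From HB Require Import structures.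
From mathcomp Require Import all_boot all_order all_algebra.
From mathcomp Require Import all_classical all_reals all_analysis.
Set Implicit Arguments. Unset Strict Implicit. Unset Printing Implicit Defensive.
Import Order.TTheory GRing.Theory Num.Theory.
Local Open Scope classical_set_scope.
Local Open Scope ring_scope.

Definition is_cond_distr d dX dY (Omega : measurableType d)
  (Xs : measurableType dX) (Ys : measurableType dY) (R : realType)
  (P : probability Omega R) (X : Omega -> Xs) (Y : Omega -> Ys)
  (k : R.-pker Xs ~> Ys) : Prop :=
  forall (A : set Xs) (B : set Ys), measurable A -> measurable B ->
    P (X @^-1` A `&` Y @^-1` B) = (\int[P]_(w in X @^-1` A) k (X w) B)%E.

(* p_C(x) = P(Y \in C | X = x) *)
Definition pC dX dY (Xs : measurableType dX) (Ys : measurableType dY)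
  (R : realType) (k : R.-pker Xs ~> Ys) (C : set Ys) (x : Xs) : R :=
  fine (k x C).

Definition ell dX dY (Xs : measurableType dX) (Ys : measurableType dY)
  (R : realType) (k : R.-pker Xs ~> Ys) (alpha : R) (wC : R) (C : set Ys)
  (x : Xs) (mu : R) : R :=
  wC * pC k C x + mu * (pC k C x - (1 - alpha)).

Definition Ux dX dY (Xs : measurableType dX) (Ys : measurableType dY)
  (R : realType) (k : R.-pker Xs ~> Ys) (alpha : R) (I : finType) (i0 : I)
  (Cs : I -> set Ys) (w : I -> R) (x : Xs) (mu : R) : R :=
  \big[Num.max/ell k alpha (w i0) (Cs i0) x mu]_(i : I)
     ell k alpha (w i) (Cs i) x mu.

Definition Dmu dX dY (Xs : measurableType dX) (Ys : measurableType dY)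
  (R : realType) (k : R.-pker Xs ~> Ys) (alpha : R) (I : finType) (i0 : I)
  (Cs : I -> set Ys) (w : I -> R) (mu : R) (x : Xs) : R :=
  if 0 <= Ux k alpha i0 Cs w x mu then 1 else 0.

Definition Tx dX dY (Xs : measurableType dX) (Ys : measurableType dY)
  (R : realType) (k : R.-pker Xs ~> Ys) (I : finType) (i0 : I)
  (Cs : I -> set Ys) (x : Xs) : R :=
  \big[Num.max/pC k (Cs i0) x]_(i : I) pC k (Cs i) x.

From HB Require Import structures.
From mathcomp Require Import all_boot all_order all_algebra.
From mathcomp Require Import all_classical all_reals all_analysis.
From mathcomp Require Import measurable_realfun.
Set Implicit Arguments. Unset Strict Implicit. Unset Printing Implicit Defensive.
Import Order.TTheory GRing.Theory Num.Theory.
Local Open Scope classical_set_scope.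
Local Open Scope ring_scope.

(* On the event {T(X) >= 1 - alpha} some C in I has p_C(X) >= 1 - alpha, and
   then every term of l_{X,C}(mu) is nonnegative, so U_X(mu) >= 0 and
   D^mu(X) = 1.  Hence E[D^mu(X)] >= P(T(X) >= 1 - alpha) > 0. *)

Lemma measurable_bigmaxr d (T : measurableType d) (R : realType) (D : set T)
    (I : Type) (s : seq I) (f0 : T -> R) (F : I -> T -> R) :
  measurable_fun D f0 -> (forall i, measurable_fun D (F i)) ->
  measurable_fun D (fun x => \big[Num.max/f0 x]_(i <- s) F i x).
Proof.
move=> mf0 mF; elim: s => [|i s IHs]; first by under eq_fun do rewrite big_nil.
under eq_fun do rewrite big_cons.
exact: measurable_maxr.
Qed.

Lemma measure_le_integral d (T : measurableType d) (R : realType)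
    (mu : {measure set T -> \bar R}) (S : set T) (f : T -> R) :
  measurable S -> measurable_fun setT f ->
  (forall x, 0 <= f x) -> (forall x, S x -> 1 <= f x) ->
  (mu S <= \int[mu]_x (f x)%:E)%E.
Proof.
move=> mS mf f_ge0 f_ge1.
rewrite -(setIT S) -integral_indic //.
apply: ge0_le_integral => //.
- by apply/measurable_EFinP; exact: measurable_indic.
- by apply/measurable_EFinP.
- move=> x _; rewrite lee_fin /indic.
  by case: (boolP (x \in S)) => // /set_mem /f_ge1.
Qed.

Section conditional_probabilities.
Context dX dY (Xs : measurableType dX) (Ys : measurableType dY) (R : realType).
Variable k : R.-pker Xs ~> Ys.

Lemma pC_ge0 (C : set Ys) (x : Xs) : 0 <= pC k C x.
Proof. exact/fine_ge0/measure_ge0. Qed.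

Lemma measurable_pC (C : set Ys) : measurable C -> measurable_fun setT (pC k C).
Proof.
move=> mC; apply: (measurableT_comp (f := fine)); first exact: fine_measurable.
exact: measurable_kernel.
Qed.

Variables (alpha : R) (I : finType) (i0 : I) (Cs : I -> set Ys) (w : I -> R).
Hypothesis mCs : forall i, measurable (Cs i).

Lemma measurable_Tx : measurable_fun setT (Tx k i0 Cs).
Proof. by apply: measurable_bigmaxr => [|i]; exact: measurable_pC. Qed.

Lemma measurable_Dmu (mu : R) : measurable_fun setT (Dmu k alpha i0 Cs w mu).
Proof.
have mell i : measurable_fun setT (fun x => ell k alpha (w i) (Cs i) x mu).
  apply: measurable_funD; apply: measurable_funM => //; first exact: measurable_pC.
  by apply: measurable_funB => //; exact: measurable_pC.
apply: measurable_fun_ifT => //.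
by apply: measurable_fun_ler => //; exact: measurable_bigmaxr.
Qed.

Lemma ell_ge0 (wC mu : R) (C : set Ys) (x : Xs) :
  0 <= wC -> 0 <= mu -> 1 - alpha <= pC k C x -> 0 <= ell k alpha wC C x mu.
Proof.
move=> wC_ge0 mu_ge0 pCx_ge.
by rewrite addr_ge0 ?mulr_ge0 ?pC_ge0 ?subr_ge0.
Qed.

Lemma Dmu_eq1 (mu : R) (x : Xs) : (forall i, 0 <= w i) -> 0 <= mu ->
  1 - alpha <= Tx k i0 Cs x -> Dmu k alpha i0 Cs w mu x = 1.
Proof.
move=> w_ge0 mu_ge0 /bigmax_geP Tx_ge; rewrite /Dmu ifT // /Ux.
have [i pC_ge] : exists i, 1 - alpha <= pC k (Cs i) x.
  by case: Tx_ge => [|[i _]]; [exists i0 | exists i].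
by apply: le_trans (le_bigmax _ _ i); exact: ell_ge0.
Qed.

End conditional_probabilities.

Theorem proposition5 (d dX dY : measure_display) (Omega : measurableType d)
  (Xs : measurableType dX) (Ys : measurableType dY) (R : realType)
  (P : probability Omega R) (X : Omega -> Xs) (Y : Omega -> Ys)
  (mX : measurable_fun setT X) (mY : measurable_fun setT Y)
  (k : R.-pker Xs ~> Ys) (hk : is_cond_distr P X Y k)
  (alpha : R) (halpha : 0 < alpha < 1)
  (I : finType) (i0 : I) (Cs : I -> set Ys) (mCs : forall i, measurable (Cs i))
  (B : R) (w : I -> R) (hw : forall i, 0 < w i < B) :
  (0 < P [set om | (1 - alpha <= Tx k i0 Cs (X om))%R])%E ->
  forall mu : R, 0 <= mu ->
    (0 < \int[P]_om (Dmu k alpha i0 Cs w mu (X om))%:E)%E.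
Proof.
move=> P_pos mu mu_ge0; apply: (lt_le_trans P_pos).
have w_ge0 i : 0 <= w i by case/andP: (hw i) => /ltW.
apply: measure_le_integral.
- rewrite -(preimage_itvcy (Tx k i0 Cs \o X)) -[X in measurable X]setTI.
  by apply: (measurableT_comp (measurable_Tx k i0 mCs) mX).
- exact: measurableT_comp (measurable_Dmu k alpha i0 w mCs mu) mX.
- by move=> om; rewrite /Dmu; case: ifP.
- by move=> om /= Tx_ge; rewrite Dmu_eq1.
Qed.
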